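(* For $n\ge2$ and all $P,Q\in\Gamma_n$, $D_{\Psi h}(P\|Q)\le \frac98 D_{\Psi J}(P\|Q)$.
   Context: $\Gamma_n=\{P=(p_1,\dots,p_n): p_i>0,\ \sum p_i=1\}$. $h(P\|Q)=\frac12\sum_{i=1}^n(\sqrt{p_i}-\sqrt{q_i})^2$; $\Psi(P\|Q)=\sum_{i=1}^n\frac{(p_i-q_i)^2(p_i+q_i)}{p_iq_i}$; $J(P\|Q)=\sum_{i=1}^n(p_i-q_i)\ln\frac{p_i}{q_i}$. $D_{\Psi h}=\frac1{16}\Psi-h$, $D_{\Psi J}=\frac1{16}\Psi-\frac18J$. *)

(* concrete reals R. Distributions on n points are functions
   nat -> R, indexed by 0..n-1. *)
From Stdlib Require Import Reals List.
Open Scope R_scope.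

Fixpoint rsum (n : nat) (f : nat -> R) : R :=
  match n with
  | O => 0
  | S m => rsum m f + f m
  end.

Definition Gamma (n : nat) (p : nat -> R) : Prop :=
  (forall i, (i < n)%nat -> 0 < p i) /\ rsum n p = 1.

Definition hellinger (n : nat) (p q : nat -> R) : R :=
  / 2 * rsum n (fun i => (sqrt (p i) - sqrt (q i)) ^ 2).

Definition Psi (n : nat) (p q : nat -> R) : R :=
  rsum n (fun i => (p i - q i) ^ 2 * (p i + q i) / (p i * q i)).

Definition Jdiv (n : nat) (p q : nat -> R) : R :=
  rsum n (fun i => (p i - q i) * ln (p i / q i)).

Definition D_Psi_h (n : nat) (p q : nat -> R) : R :=
  / 16 * Psi n p q - hellinger n p q.

Definition D_Psi_J (n : nat) (p q : nat -> R) : R :=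
  / 16 * Psi n p q - / 8 * Jdiv n p q.

(* The inequality holds summand by summand.  Writing p = x^2 q, each summand of
   (9/8) D_PsiJ - D_Psih equals (9/32) q (x^2 - 1) (L x - ln x), where L is the
   rational function [ln_approx].  Since (L - ln)' = (x-1)^4 (x^2+6x+1) / (18 x^3 (x+1)^2)
   is nonnegative and L 1 = ln 1, the function L - ln has the sign of x - 1. *)
From Stdlib Require Import Reals Lra Lia.
From Coquelicot Require Import Coquelicot.
Open Scope R_scope.

Lemma rsum_plus n f g :
  rsum n (fun i => f i + g i) = rsum n f + rsum n g.
Proof. induction n as [|n IH]; simpl; [lra | rewrite IH; lra]. Qed.

Lemma rsum_scal n c f : rsum n (fun i => c * f i) = c * rsum n f.
Proof. induction n as [|n IH]; simpl; [lra | rewrite IH; lra]. Qed.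

Lemma rsum_nonneg n f : (forall i, (i < n)%nat -> 0 <= f i) -> 0 <= rsum n f.
Proof.
  induction n as [|n IH]; simpl; intros Hf; [lra|].
  assert (0 <= f n) by (apply Hf; lia).
  assert (0 <= rsum n f) by (apply IH; intros i Hi; apply Hf; lia).
  lra.
Qed.

Lemma sign_of_nondecreasing_at_root (f f' : R -> R) (a c x : R) :
  (forall y, a < y -> is_derive f y (f' y)) -> (forall y, a < y -> 0 <= f' y) ->
  a < c -> a < x -> f c = 0 -> 0 <= (x - c) * f x.
Proof.
  intros Hder Hpos Hc Hx Hfc.
  assert (Hmvt : forall u v, a < u -> u < v ->
            exists w, f v - f u = f' w * (v - u) /\ a < w).
  { intros u v Hu Huv.
    destruct (MVT_cor2 f f' u v Huv) as [w [Hw [Hw1 _]]].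
    - intros w Hw. apply is_derive_Reals, Hder. lra.
    - exists w. split; [exact Hw | lra]. }
  destruct (Rtotal_order x c) as [Hlt | [-> | Hgt]].
  - destruct (Hmvt x c Hx Hlt) as [w [Hw Haw]].
    assert (0 <= f' w * (c - x)) by (apply Rmult_le_pos; [apply Hpos |]; lra).
    replace ((x - c) * f x) with ((c - x) * - f x) by ring.
    apply Rmult_le_pos; lra.
  - lra.
  - destruct (Hmvt c x Hc Hgt) as [w [Hw Haw]].
    assert (0 <= f' w * (x - c)) by (apply Rmult_le_pos; [apply Hpos |]; lra).
    apply Rmult_le_pos; lra.
Qed.

Definition ln_approx (x : R) : R := (x^4 - 1) / (36 * x^2) + 16 * (x - 1) / (9 * (x + 1)).

Lemma is_derive_ln_approx_sub_ln x : 0 < x ->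
  is_derive (fun y => ln_approx y - ln y) x
    ((x - 1)^4 * (x^2 + 6 * x + 1) / (18 * x^3 * (x + 1)^2)).
Proof.
  intros Hx. unfold ln_approx. auto_derive.
  - repeat split; try lra; nra.
  - field. lra.
Qed.

Lemma ln_approx_sub_ln_sign x : 0 < x -> 0 <= (x - 1) * (ln_approx x - ln x).
Proof.
  intros Hx.
  apply (sign_of_nondecreasing_at_root (fun y => ln_approx y - ln y)
           (fun y => (y - 1)^4 * (y^2 + 6 * y + 1) / (18 * y^3 * (y + 1)^2)) 0);
    try lra.
  - exact is_derive_ln_approx_sub_ln.
  - intros y Hy. apply Rdiv_le_0_compat.
    + apply Rmult_le_pos; [|nra].
      replace ((y - 1)^4) with (((y - 1)^2)^2) by ring. apply pow2_ge_0.
    + apply Rmult_lt_0_compat; [|apply pow_lt; lra].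
      apply Rmult_lt_0_compat; [lra | apply pow_lt; lra].
  - unfold ln_approx. rewrite ln_1. field.
Qed.

Lemma J_summand_le_of_ratio x q : 0 < x -> 0 < q ->
  9 / 64 * ((x^2 * q - q) * ln (x^2 * q / q)) <=
  / 128 * ((x^2 * q - q)^2 * (x^2 * q + q) / (x^2 * q * q))
  + / 2 * (sqrt (x^2 * q) - sqrt q)^2.
Proof.
  intros Hx Hq.
  replace (x^2 * q / q) with (x * x) by (field; lra).
  rewrite ln_mult, sqrt_mult_alt, sqrt_pow2 by (try apply pow2_ge_0; lra).
  assert (Hdiff : 0 <= 9 / 32 * q * (x + 1) * ((x - 1) * (ln_approx x - ln x)))
    by (apply Rmult_le_pos; [nra | exact (ln_approx_sub_ln_sign x Hx)]).
  apply Rminus_le_0, (Rle_trans _ _ _ Hdiff), Req_le.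
  replace (x * sqrt q - sqrt q) with ((x - 1) * sqrt q) by ring.
  rewrite Rpow_mult_distr, pow2_sqrt by lra.
  unfold ln_approx. field. lra.
Qed.

Lemma J_summand_le p q : 0 < p -> 0 < q ->
  9 / 64 * ((p - q) * ln (p / q)) <=
  / 128 * ((p - q)^2 * (p + q) / (p * q)) + / 2 * (sqrt p - sqrt q)^2.
Proof.
  intros Hp Hq.
  assert (Hpq : 0 < p / q) by (apply Rdiv_lt_0_compat; assumption).
  pose (x := sqrt (p / q)).
  assert (Ep : p = x^2 * q) by (unfold x; rewrite pow2_sqrt by lra; field; lra).
  rewrite Ep. apply J_summand_le_of_ratio; [apply sqrt_lt_R0 |]; assumption.
Qed.

Theorem proposition5p12 (n : nat) (p q : nat -> R) :
  (2 <= n)%nat -> Gamma n p -> Gamma n q ->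
  D_Psi_h n p q <= 9 / 8 * D_Psi_J n p q.
Proof.
  intros _ [Hp _] [Hq _].
  pose (summand i := / 128 * ((p i - q i)^2 * (p i + q i) / (p i * q i))
                     + / 2 * (sqrt (p i) - sqrt (q i))^2
                     + - (9 / 64) * ((p i - q i) * ln (p i / q i))).
  assert (Hsum : rsum n summand = 9 / 8 * D_Psi_J n p q - D_Psi_h n p q).
  { unfold summand. rewrite !rsum_plus, !rsum_scal.
    unfold D_Psi_J, D_Psi_h, Psi, Jdiv, hellinger. lra. }
  assert (0 <= rsum n summand).
  { apply rsum_nonneg. intros i Hi. unfold summand.
    pose proof (J_summand_le (p i) (q i) (Hp i Hi) (Hq i Hi)). lra. }
  lra.
Qed.
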